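(* Let $k<\omega$, $\bar S=\langle S_m:m\le k\rangle$ and $\Lambda\subseteq\prod_{m\le k}{}^\omega(S_m)$. Assume there is a family $\langle\alpha_{\bar\eta,m,n}:\bar\eta\in\Lambda,m\le k,n<\omega\rangle$ of ordinals below $2^{\aleph_0}$ such that for every function $h:\Lambda_{\le k}\to 2^{\aleph_0}$ there is $\bar\eta\in\Lambda$ with $h(\bar\eta\upharpoonleft\langle m,n\rangle)=\alpha_{\bar\eta,m,n}$ for all $m\le k$, $n<\omega$. Then there is $\mathbf a:\Lambda\times\omega\to\mathbb Z$ such that, writing $G=G_{(k,\bar S,\Lambda,\mathbf a)}$, every homomorphism $h:G\to\mathbb Z$ satisfies $h(z)=0$.
   Context: For a set $X$, ${}^\omega X$ is the set of functions $\omega\to X$; $\Lambda$ consists of sequences $\bar\eta=\langle\eta_0,\dots,\eta_k\rangle$ with $\eta_m\in{}^\omega(S_m)$. For $\bar\eta\in\Lambda$, $m\le k$, $n<\omega$, $\bar\eta\upharpoonleft\langle m,n\rangle$ is the sequence obtained from $\bar\eta$ by replacing $\eta_m$ with $\eta_m\restriction n$. $\Lambda_m=\{\bar\eta\upharpoonleft\langle m,n\rangle:\bar\eta\in\Lambda,n<\omega\}$, $\Lambda_{\le k}=\bigcup_{m\le k}\Lambda_m$. Given $\mathbf a:\Lambda\times\omega\to\mathbb Z$ (write $\mathbf a_{\bar\eta,n}$), $G_{(k,\bar S,\Lambda,\mathbf a)}$ is the abelian group generated by $z$, $x_{\bar\nu}$ ($\bar\nu\in\Lambda_{\le k}$) and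 $y_{\bar\eta,n}$ ($\bar\eta\in\Lambda,n<\omega$) freely except for the relations $(n!)y_{\bar\eta,n+1}=y_{\bar\eta,n}+\mathbf a_{\bar\eta,n}z+\sum_{m\le k}x_{\bar\eta\upharpoonleft\langle m,n\rangle}$ ($\bar\eta\in\Lambda$, $n<\omega$). *)

From mathcomp Require Import all_boot all_order all_algebra.
Set Implicit Arguments. Unset Strict Implicit. Unset Printing Implicit Defensive.
Import GRing.Theory Num.Theory.

(* Index set {0,...,k} is 'I_k.+1.  A sequence <eta_0,...,eta_k> with
   eta_m in ^omega(S_m) is a dependent function. *)
Definition tup (k : nat) (S : 'I_k.+1 -> Type) := forall m : 'I_k.+1, nat -> S m.

(* Encoding of elements of Lambda_{<=k}: a sequence whose coordinates are
   partial sequences nat -> option (S j); a finite sequence of length n is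
   encoded by Some on indices < n and None afterwards.  This encoding is
   injective on sequences of the shape  eta |` <m,n>. *)
Definition ltup (k : nat) (S : 'I_k.+1 -> Type) := forall j : 'I_k.+1, nat -> option (S j).

Definition trunc (k : nat) (S : 'I_k.+1 -> Type) (eta : tup S) (m : 'I_k.+1) (n : nat)
  : ltup S :=
  fun j i => if (j == m) && (n <= i)%N then None else Some (eta j i).

(* The continuum 2^aleph_0, represented by a set of that cardinality. *)
Definition continuum := nat -> bool.

(* A homomorphism h : G_(k,S,Lambda,a) -> Z is exactly an assignment of
   integers to the generators z, x_nu, y_{eta,n} satisfying the defining
   relations (universal property of the presentation).  The arguments
   zv, xv, yv are the values h(z), h(x_nu), h(y_{eta,n}). *)
Definition respects_relations (k : nat) (S : 'I_k.+1 -> Type) (Lam : tup S -> Prop)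
  (a : tup S -> nat -> int) (zv : int) (xv : ltup S -> int) (yv : tup S -> nat -> int) :=
  forall eta, Lam eta -> forall n : nat,
    ((n`!)%:Z * yv eta n.+1 = yv eta n + a eta n * zv + \sum_(m < k.+1) xv (trunc eta m n))%R.

From mathcomp Require Import all_boot all_order all_algebra.
From mathcomp Require Import zify ring.
From Stdlib Require Import ClassicalEpsilon.
Set Implicit Arguments. Unset Strict Implicit.
Import GRing.Theory Num.Theory.

(* Choose [a eta = 1] exactly when the values guessed by [alpha eta] for the
   [x]'s admit an integer solution [y] of the relations with the [z]-term
   dropped.  Given a homomorphism [h], its values on the [x_nu] form a function
   into the continuum, which some [eta] guesses.  If [a eta = 1], subtracting
   that solution from [h] yields integers [d_n] with [n! d_(n+1) = d_n + h z];
   such [d_n] are bounded, hence eventually [0], which forces [h z = 0].  If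
   [a eta = 0], [h] itself solves the guessed system, which is absurd. *)

Section FactorialRecurrence.
Variables (c : int) (d : nat -> int).
Hypothesis recd : forall n, ((n`!)%:Z * d n.+1 = d n + c)%R.

Lemma fact_recurrence_abs_le n : (n`! * `|d n.+1| <= `|d n| + `|c|)%N.
Proof. by have /(congr1 absz) := recd n; rewrite abszM absz_nat => ->; lia. Qed.

Lemma fact_recurrence_bounded i : (`|d (i + 2)| <= `|d 2| + `|c|)%N.
Proof.
(* For [n >= 2], [n! >= 2] and [|c| <= |d 2| + |c|] make the bound inductive. *)
elim: i => [|i IH]; first exact: leq_addr.
have := fact_recurrence_abs_le (i + 2); rewrite -addSn.
have : (2 <= (i + 2)`!)%N by apply: leq_trans (fact_geq _); lia.
nia.
Qed.

Lemma fact_recurrence_eventually0 n :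
  (`|d 2| + 2 * `|c| + 2 <= n)%N -> d n.+1 = 0%R.
Proof.
move=> large; apply/eqP; rewrite -absz_eq0 -leqn0 leqNgt; apply/negP => pos.
have := fact_recurrence_abs_le n; rewrite mulnC.
have := leq_pmull n`! pos; have := fact_geq n.
have := fact_recurrence_bounded (n - 2); rewrite subnK; last by lia.
move: large; move: (n`!) (`|d n|) (`|d n.+1| * n`!)%N (`|d 2|) (`|c|) => f a u b e.
lia.
Qed.

Lemma fact_recurrence_const0 : c = 0%R.
Proof.
set N := (`|d 2| + 2 * `|c| + 2)%N.
have d_N1 : d N.+1 = 0%R by exact: fact_recurrence_eventually0.
have d_N2 : d N.+2 = 0%R by apply: fact_recurrence_eventually0; exact: leqnSn.
by have := recd N.+1; rewrite d_N1 d_N2 mulr0 add0r.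
Qed.
End FactorialRecurrence.

Lemma fact_recurrence_shift0 (c : int) (s y y' : nat -> int) :
  (forall n, ((n`!)%:Z * y n.+1 = y n + c + s n)%R) ->
  (forall n, ((n`!)%:Z * y' n.+1 = y' n + s n)%R) -> c = 0%R.
Proof.
move=> recy recy'; apply: (@fact_recurrence_const0 c (fun n => y n - y' n)%R).
by move=> n; rewrite mulrBr recy recy'; ring.
Qed.

Definition continuum_of_int (x : int) : continuum := fun i => i == pickle x.

Lemma continuum_of_int_inj : injective continuum_of_int.
Proof.
move=> x y /(congr1 (fun f => f (pickle y))); rewrite /continuum_of_int eqxx.
by move/eqP/(congr1 (@unpickle int)); rewrite !pickleK => -[].
Qed.

Definition guessed_solvable (k : nat) (S : 'I_k.+1 -> Type)
  (alpha : tup S -> 'I_k.+1 -> nat -> continuum) (eta : tup S) : Prop :=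
  exists (y : nat -> int) (x : 'I_k.+1 -> nat -> int),
    (forall m n, continuum_of_int (x m n) = alpha eta m n) /\
    forall n, ((n`!)%:Z * y n.+1 = y n + \sum_(m < k.+1) x m n)%R.

Definition guessed_coef (k : nat) (S : 'I_k.+1 -> Type)
  (alpha : tup S -> 'I_k.+1 -> nat -> continuum) (eta : tup S) (n : nat) : int :=
  if excluded_middle_informative (guessed_solvable alpha eta) then 1%R else 0%R.

Theorem claim2p3 (k : nat) (S : 'I_k.+1 -> Type) (Lam : tup S -> Prop)
  (alpha : tup S -> 'I_k.+1 -> nat -> continuum) :
  (forall h : ltup S -> continuum,
     exists eta, Lam eta /\ forall (m : 'I_k.+1) (n : nat), h (trunc eta m n) = alpha eta m n) ->
  exists a : tup S -> nat -> int,
    forall (zv : int) (xv : ltup S -> int) (yv : tup S -> nat -> int),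
      respects_relations Lam a zv xv yv -> zv = 0%R.
Proof.
move=> guess; exists (guessed_coef alpha) => zv xv yv hom.
have [eta [Lam_eta guessed]] := guess (continuum_of_int \o xv).
have rel := hom eta Lam_eta; rewrite /guessed_coef in rel.
case: excluded_middle_informative rel => [[y [x [xE recy]]] | unsolvable] rel.
- have xE' m n : x m n = xv (trunc eta m n).
    by apply: continuum_of_int_inj; rewrite xE -guessed.
  apply: (fact_recurrence_shift0 (y := yv eta) _ recy) => n.
  by rewrite rel mul1r (eq_bigr _ (fun m _ => xE' m n)).
- have solvable : guessed_solvable alpha eta.
    exists (yv eta), (fun m n => xv (trunc eta m n)); split.
    + by move=> m n; rewrite -guessed.
    + by move=> n; rewrite rel mul0r addr0.
  by case: (unsolvable solvable).
Qed.
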